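(* Let $H$, $d$, $(X,\mu)$, $\mathcal{A}$, $(N_s)$, $\delta_r,s_r,\sigma_s$ be as in the context and fix an integer $r\ge3$. Fix $0\le\alpha<\beta$ and an integer $s>s_r+r$. Then for any partition $\mathcal{Q}$ of $[r]$, any $\underline h\in\Delta_{\mathcal{Q}}(\alpha,\beta)$ and any $f\in\mathcal{A}$, $$|\psi_{f,\underline h}(I)-\psi^{\mathcal{Q}}_{f,\underline h}(I)|\le C_{r,s}\,e^{-(\beta\delta_r-r\alpha\sigma_s)}N_s(f)^{|I|}\quad\text{for all }I\subset[r],$$ where $C_{r,s}$ depends only on $r$ and $s$.
   Context: $H$ is a locally compact second countable group with left-invariant metric $d$, acting measure-preservingly on a probability space $(X,\mu)$; $h\cdot f=f\circ h^{-1}$. $\mathcal{A}\subset L^\infty(X,\mu)$ is an $H$-invariant subalgebra and $(N_s)_{s\ge1}$ seminorms on it with (constants depending only on $s$): $N_s(f)\ll N_{s+1}(f)$; $\|f\|_{L^\infty}\ll N_s(f)$; $N_s(h\cdot f)\ll e^{\sigma_s d(h,e)}N_s(f)$ for some $\sigma_s>0$; $N_s(f_1f_2)\ll N_{s+1}(f_1)N_{s+1}(f_2)$. Exponential mixing of all orders: for every $k\ge2$ there are $\delta_k>0$ and an integer $s_k>0$ with $\big|\mu(\prod_{i=1}^k h_i\cdot f_i)-\prod_i\mu(f_i)\big|\ll_{k,s}e^{-\delta_k\min_{i\ne j}d(h_i,h_j)}\prod_iN_s(f_i)$ for all $s>s_k$, $f_i\in\mathcal{A}$, $h_i\in H$;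 $(\sigma_s)$, $(s_k)$ increasing, $(\delta_k)$ decreasing, $\delta_k<k\sigma_s$. Distances: $d^I(\underline h)=\max_{i,j\in I}d(h_i,h_j)$, $d_{I,J}(\underline h)=\min_{i\in I,j\in J}d(h_i,h_j)$, $d^{\mathcal{Q}}=\max_{I\in\mathcal{Q}}d^I$, $d_{\mathcal{Q}}=\min\{d_{I,J}:I\ne J\in\mathcal{Q}\}$, $\Delta_{\mathcal{Q}}(\alpha,\beta)=\{\underline h\in H^r:d^{\mathcal{Q}}(\underline h)\le\alpha,\ d_{\mathcal{Q}}(\underline h)>\beta\}$. For $f\in\mathcal{A}$, $\underline h\in H^r$: $\psi_{f,\underline h}(I)=\mu(\prod_{i\in I}h_i\cdot f)$ for $I\ne\emptyset$, $\psi_{f,\underline h}(\emptyset)=1$, and $\psi^{\mathcal{Q}}_{f,\underline h}(I)=\prod_{J\in\mathcal{Q}}\psi_{f,\underline h}(I\cap J)$. *)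

From HB Require Import structures.
From mathcomp Require Import all_boot all_order all_algebra.
From mathcomp Require Import all_classical all_reals all_analysis.
Set Implicit Arguments. Unset Strict Implicit. Unset Printing Implicit Defensive.
Import Order.TTheory GRing.Theory Num.Theory.
Local Open Scope ring_scope.
Local Open Scope classical_set_scope.

Section Defs.
Variable R : realType.

Definition is_group (H : Type) (mul : H -> H -> H) (inv : H -> H) (e : H) : Prop :=
  [/\ forall x y z, mul x (mul y z) = mul (mul x y) z,
      forall x, mul e x = x, forall x, mul x e = x,
      forall x, mul (inv x) x = e & forall x, mul x (inv x) = e].

Definition is_metric (H : Type) (d : H -> H -> R) : Prop :=
  [/\ forall x y, 0 <= d x y, forall x y, d x y = 0 <-> x = y,
      forall x y, d x y = d y x & forall x y z, d x z <= d x y + d y z].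

Definition left_invariant (H : Type) (mul : H -> H -> H) (d : H -> H -> R) : Prop :=
  forall g x y, d (mul g x) (mul g y) = d x y.

Definition is_mp_action (H : Type) (mul : H -> H -> H) (e : H)
  (dX : measure_display) (X : measurableType dX) (mu : probability X R)
  (act : H -> X -> X) : Prop :=
  [/\ forall x, act e x = x,
      forall g h x, act (mul g h) x = act g (act h x),
      forall h, measurable_fun setT (act h) &
      forall h (B : set X), measurable B -> mu (act h @^-1` B) = mu B].

Definition hact (H : Type) (inv : H -> H) (X : Type) (act : H -> X -> X)
  (h : H) (f : X -> R) : X -> R := fun x => f (act (inv h) x).

Definition muI (dX : measure_display) (X : measurableType dX) (mu : probability X R)
  (f : X -> R) : R := fine (\int[mu]_x (f x)%:E)%E.

Definition is_inv_subalgebra (H : Type) (inv : H -> H)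
  (dX : measure_display) (X : measurableType dX) (mu : probability X R)
  (act : H -> X -> X) (A : set (X -> R)) : Prop :=
  (forall f, A f -> measurable_fun setT f) /\
  (forall f, A f -> exists M : R, {ae mu, forall x, `|f x| <= M}) /\
  (forall f g, A f -> A g -> A (f \+ g)) /\
  (forall f g, A f -> A g -> A (f \* g)) /\
  (forall (c : R) f, A f -> A (fun x => c * f x)) /\
  (forall h f, A f -> A (hact inv act h f)).

Definition seminorms_ok (H : Type) (inv : H -> H) (e : H) (d : H -> H -> R)
  (dX : measure_display) (X : measurableType dX) (mu : probability X R)
  (act : H -> X -> X) (A : set (X -> R)) (N : nat -> (X -> R) -> R)
  (sigma : nat -> R) : Prop :=
  (forall s, (1 <= s)%N -> forall f g, A f -> A g -> N s (f \+ g) <= N s f + N s g) /\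
  (forall s, (1 <= s)%N -> forall (c : R) f, A f -> N s (fun x => c * f x) = `|c| * N s f) /\
  (forall s, (1 <= s)%N -> exists C : R, forall f, A f -> N s f <= C * N s.+1 f) /\
  (forall s, (1 <= s)%N -> exists C : R, forall f, A f ->
          {ae mu, forall x, `|f x| <= C * N s f}) /\
  (forall s, (1 <= s)%N -> exists C : R, forall h f, A f ->
          N s (hact inv act h f) <= C * expR (sigma s * d h e) * N s f) /\
  (forall s, (1 <= s)%N -> exists C : R, forall f1 f2, A f1 -> A f2 ->
          N s (f1 \* f2) <= C * N s.+1 f1 * N s.+1 f2).

Local Open Scope ereal_scope.
Definition sepmin (H : Type) (d : H -> H -> R) (I : finType) (h : I -> H) : \bar R :=
  \big[mine/+oo]_(i : I) \big[mine/+oo]_(j : I | i != j) (d (h i) (h j))%:E.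
Definition dsup (H : Type) (d : H -> H -> R) (I : finType) (h : I -> H) (J : {set I}) : \bar R :=
  \big[maxe/-oo]_(i in J) \big[maxe/-oo]_(j in J) (d (h i) (h j))%:E.
Definition dbetween (H : Type) (d : H -> H -> R) (I : finType) (h : I -> H)
  (J K : {set I}) : \bar R :=
  \big[mine/+oo]_(i in J) \big[mine/+oo]_(j in K) (d (h i) (h j))%:E.
Definition dQmax (H : Type) (d : H -> H -> R) (I : finType) (h : I -> H)
  (Q : {set {set I}}) : \bar R :=
  \big[maxe/-oo]_(J in Q) dsup d h J.
Definition dQmin (H : Type) (d : H -> H -> R) (I : finType) (h : I -> H)
  (Q : {set {set I}}) : \bar R :=
  \big[mine/+oo]_(J in Q) \big[mine/+oo]_(K in Q | J != K) dbetween d h J K.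
Definition DeltaQ (H : Type) (d : H -> H -> R) (I : finType) (Q : {set {set I}})
  (alpha beta : R) : set (I -> H) :=
  [set h | dQmax d h Q <= alpha%:E /\ beta%:E < dQmin d h Q].
Local Close Scope ereal_scope.

Definition exp_mixing_all_orders (H : Type) (inv : H -> H) (d : H -> H -> R)
  (dX : measure_display) (X : measurableType dX) (mu : probability X R)
  (act : H -> X -> X) (A : set (X -> R)) (N : nat -> (X -> R) -> R)
  (delta : nat -> R) (sk : nat -> nat) : Prop :=
  forall k, (2 <= k)%N ->
    0 < delta k /\ (0 < sk k)%N /\
    forall s, (sk k < s)%N -> exists C : R,
      forall (f : 'I_k -> X -> R) (h : 'I_k -> H), (forall i, A (f i)) ->
        `| muI mu (fun x => \prod_(i < k) hact inv act (h i) (f i) x)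
           - \prod_(i < k) muI mu (f i) |
        <= C * expR (- (delta k * fine (sepmin d h))) * \prod_(i < k) N s (f i).

Definition psi (H : Type) (inv : H -> H)
  (dX : measure_display) (X : measurableType dX) (mu : probability X R)
  (act : H -> X -> X) (I : finType) (f : X -> R) (h : I -> H) (J : {set I}) : R :=
  if J == finset.set0 then 1
  else muI mu (fun x => \prod_(i in J) hact inv act (h i) f x).

Definition psiQ (H : Type) (inv : H -> H)
  (dX : measure_display) (X : measurableType dX) (mu : probability X R)
  (act : H -> X -> X) (I : finType) (Q : {set {set I}}) (f : X -> R) (h : I -> H)
  (J : {set I}) : R :=
  \prod_(K in Q) psi inv mu act f h (J :&: K).

End Defs.

From HB Require Import structures.
From mathcomp Require Import all_boot all_order all_algebra.
From mathcomp Require Import all_classical all_reals all_analysis.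
From mathcomp Require Import measurable_realfun.
From mathcomp Require Import ring lra zify.
Set Implicit Arguments. Unset Strict Implicit. Unset Printing Implicit Defensive.
Import Order.TTheory GRing.Theory Num.Theory.
Local Open Scope ring_scope.

(* Let I be nonempty and group its indices by the blocks K of Q that meet it. Choosing an
   anchor c K in each block, the product of the translates h_i . f over I is the product over
   these blocks of h_(c K) . F_K, where F_K is the product over I :&: K of the recentred
   translates (h_(c K)^-1 h_i) . f. By invariance of mu, mu(F_K) = psi(I :&: K), so psi^Q(I)
   is the product of the mu(F_K), and mixing of order #blocks <= r bounds psi(I) - psi^Q(I) by
   exp(-delta_r beta) times the product of the seminorms of the F_K, anchors of distinct
   blocks being more than beta apart. Each recentring element has size at most alpha, so the
   action bound and the product rule (one seminorm level per factor, whence mixing is used at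
   level s - r) bound that product by a constant times exp(r alpha sigma_s) N_s(f)^#|I|. *)

Lemma integral_measure_preserving (R : realType) (dT : measure_display)
    (T : measurableType dT) (mu : {measure set T -> \bar R}) (phi : T -> T) :
  measurable_fun setT phi ->
  (forall B, measurable B -> mu (phi @^-1` B)%classic = mu B) ->
  forall F : T -> \bar R, measurable_fun setT F ->
  (\int[mu]_x F (phi x) = \int[mu]_x F x)%E.
Proof.
move=> mphi phi_mu.
have ge0_inv (G : T -> \bar R) : measurable_fun setT G -> (forall y, 0 <= G y)%E ->
    (\int[mu]_x (G \o phi) x = \int[mu]_x G x)%E.
  move=> mG G0; have := ge0_integral_pushforward mphi mu measurableT mG (fun y _ => G0 y).
  rewrite preimage_setT => <-.
  by apply: eq_measure_integral => B mB _ /=; rewrite /pushforward phi_mu.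
move=> F mF; change (\int[mu]_x (F \o phi) x = \int[mu]_x F x)%E.
rewrite integralE [RHS]integralE funepos_comp funeneg_comp !ge0_inv //.
- exact: measurable_funeneg.
- exact: measurable_funepos.
Qed.

Lemma big_partition_setI (R : Type) (idx : R) (op : Monoid.com_law idx)
    (T : finType) (P : {set {set T}}) (I : {set T}) (F : T -> R) :
  finset.partition P [set: T] ->
  \big[op/idx]_(i in I) F i = \big[op/idx]_(K in P) \big[op/idx]_(i in I :&: K) F i.
Proof.
move=> partP.
rewrite (eq_bigl (fun i => (i \in [set: T]) && (i \in I))); last by move=> i; rewrite inE.
rewrite (set_partition_big_cond _ partP); apply: eq_bigr => K _.
by apply: eq_bigl => i; rewrite inE andbC.
Qed.

Lemma card_partition_le (T : finType) (P : {set {set T}}) (D : {set T}) :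
  finset.partition P D -> (#|P| <= #|D|)%N.
Proof.
move=> partP; rewrite (card_partition partP) -sum1_card leq_sum // => K KP.
by rewrite card_gt0; apply: contraTneq KP => ->; case/and3P: partP.
Qed.

Lemma exists_partition_anchor (T : finType) (x0 : T) (P : {set {set T}}) (D : {set T}) :
  finset.partition P D -> exists c : {set T} -> T, forall K, K \in P -> c K \in K.
Proof.
case/and3P=> _ _ P0; exists (fun K : {set T} => odflt x0 [pick x in K]) => K KP.
have /set0Pn[x xK] : K != finset.set0 by apply: contraNneq P0 => <-.
by case: pickP => [y //|/(_ x)]; rewrite xK.
Qed.

Section BlocksMeeting.
Variables (T : finType) (P : {set {set T}}) (I : {set T}).

Definition blocks_meeting : {set {set T}} := [set K in P | I :&: K != finset.set0].

Lemma big_blocks_meeting (R : Type) (idx : R) (op : Monoid.com_law idx)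
    (G : {set T} -> R) :
  G finset.set0 = idx ->
  \big[op/idx]_(K in P) G (I :&: K) = \big[op/idx]_(K in blocks_meeting) G (I :&: K).
Proof.
move=> G0; rewrite (bigID [pred K | I :&: K != finset.set0]) /=.
rewrite [X in op _ X]big1 => [|K /andP[_ /negPn/eqP ->] //].
by rewrite Monoid.mulm1; apply: eq_bigl => K; rewrite inE.
Qed.

Hypothesis partP : finset.partition P [set: T].

Lemma big_partition_meeting (R : Type) (idx : R) (op : Monoid.com_law idx) (F : T -> R) :
  \big[op/idx]_(i in I) F i =
  \big[op/idx]_(K in blocks_meeting) \big[op/idx]_(i in I :&: K) F i.
Proof.
rewrite (big_partition_setI _ _ _ partP).
by apply: (big_blocks_meeting _ (G := fun J => \big[op/idx]_(i in J) F i)); rewrite big_set0.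
Qed.

Lemma card_blocks_meeting : (#|blocks_meeting| <= #|T|)%N.
Proof.
rewrite -cardsT; apply: leq_trans (card_partition_le partP).
by apply: subset_leq_card; rewrite /blocks_meeting setIdE subsetIl.
Qed.

Lemma card_blocks_meeting_gt0 : I != finset.set0 -> (0 < #|blocks_meeting|)%N.
Proof.
case/set0Pn => i iI; have iP : i \in finset.cover P by rewrite (cover_partition partP) inE.
apply/card_gt0P; exists (finset.pblock P i); rewrite inE finset.pblock_mem //=.
by apply/set0Pn; exists i; rewrite inE iI finset.mem_pblock.
Qed.

End BlocksMeeting.

Lemma exists_uniform_bound (R : realDomainType) (P : nat -> R -> Prop) (n : nat) :
  (forall k C C', C <= C' -> P k C -> P k C') ->
  (forall k, (k <= n)%N -> exists C, P k C) ->
  exists C, forall k, (k <= n)%N -> P k C.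
Proof.
move=> P_mono; elim: n => [|n IH] bounded.
  by have [C PC] := bounded 0%N isT; exists C => k; rewrite leqn0 => /eqP ->.
have [C1 PC1] := IH (fun k kn => bounded k (leqW kn)).
have [C2 PC2] := bounded n.+1 (leqnn _).
exists (Num.max C1 C2) => k; rewrite leq_eqVlt ltnS => /orP[/eqP -> | kn].
- by apply: P_mono (PC2); rewrite le_max lexx orbT.
- by apply: P_mono (PC1 k kn); rewrite le_max lexx.
Qed.

Lemma expr_le_max1 (R : realDomainType) (x : R) n m :
  0 <= x -> (n <= m)%N -> x ^+ n <= Num.max 1 x ^+ m.
Proof.
move=> x0 nm; have x1 : 1 <= Num.max 1 x by rewrite le_max lexx.
apply: (@le_trans _ _ (Num.max 1 x ^+ n)); last exact: ler_weXn2l.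
by apply: lerXn2r; rewrite ?nnegrE ?le_max ?lexx ?orbT ?ler01.
Qed.

Lemma ler_prod_pow_max1 (R : realDomainType) (a b c p q u : R) (m n k : nat) :
  0 <= a -> 0 <= b -> 0 <= c -> 0 <= p -> 0 <= q -> 1 <= u -> (m <= k)%N -> (n <= k)%N ->
  a * b * p ^+ m * (q * u * c) ^+ n
    <= a * Num.max 1 p ^+ k * Num.max 1 q ^+ k * (b * u ^+ k) * c ^+ n.
Proof.
move=> a0 b0 c0 p0 q0 u1 mk nk.
have u0 : 0 <= u by apply: le_trans u1.
have growth : p ^+ m * q ^+ n * u ^+ n <= Num.max 1 p ^+ k * Num.max 1 q ^+ k * u ^+ k.
  apply: ler_pM; rewrite ?mulr_ge0 ?exprn_ge0 //; last exact: ler_weXn2l.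
  by apply: ler_pM; rewrite ?exprn_ge0 ?expr_le_max1.
have -> : a * b * p ^+ m * (q * u * c) ^+ n = a * b * c ^+ n * (p ^+ m * q ^+ n * u ^+ n).
  by rewrite !exprMn; ring.
have -> : a * Num.max 1 p ^+ k * Num.max 1 q ^+ k * (b * u ^+ k) * c ^+ n
    = a * b * c ^+ n * (Num.max 1 p ^+ k * Num.max 1 q ^+ k * u ^+ k) by ring.
by rewrite ler_wpM2l // !mulr_ge0 ?exprn_ge0.
Qed.

Section GroupFacts.
Variables (G : Type) (mul : G -> G -> G) (inv : G -> G) (e : G).
Hypothesis Hgrp : is_group mul inv e.

Lemma group_invM x y : inv (mul x y) = mul (inv y) (inv x).
Proof.
case: Hgrp => mulA mul1g mulg1 mulVg mulgV.
have xyK : mul (mul x y) (mul (inv y) (inv x)) = e.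
  by rewrite -mulA (mulA y) mulgV mul1g mulgV.
by rewrite -[LHS]mulg1 -xyK mulA mulVg mul1g.
Qed.

Lemma group_mulKV x y : mul x (mul (inv x) y) = y.
Proof. by case: Hgrp => mulA mul1g _ _ mulgV; rewrite mulA mulgV mul1g. Qed.

Lemma dist_mulV_unit (R : realType) (d : G -> G -> R) :
  left_invariant mul d -> forall x y, d (mul (inv y) x) e = d x y.
Proof. by case: Hgrp => _ _ _ mulVg _ dinv x y; rewrite -(mulVg y) dinv. Qed.

End GroupFacts.

Lemma prod_cons_fun (R : ringType) (X I : Type) (a : I) (s : seq I) (g : I -> X -> R) :
  (fun x => \prod_(i <- a :: s) g i x) = g a \* (fun x => \prod_(i <- s) g i x).
Proof. by apply/funext => x; rewrite big_cons. Qed.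

Lemma prod_enum_fun (R : comRingType) (X : Type) (T : finType) (S : {set T}) (g : T -> X -> R) :
  (fun x => \prod_(i in S) g i x) = (fun x => \prod_(i <- enum S) g i x).
Proof. by apply/funext => x; rewrite big_enum. Qed.

Section Seminorms.
Variables (R : realType) (X : Type) (A : set (X -> R)) (N : nat -> (X -> R) -> R).
Hypothesis Amul : forall f g, A f -> A g -> A (f \* g).
Hypothesis Ascale : forall (c : R) f, A f -> A (fun x => c * f x).
Hypothesis Nadd : forall s, (1 <= s)%N ->
  forall f g, A f -> A g -> N s (f \+ g) <= N s f + N s g.
Hypothesis Nscale : forall s, (1 <= s)%N ->
  forall (c : R) f, A f -> N s (fun x => c * f x) = `|c| * N s f.
Hypothesis Nstep : forall s, (1 <= s)%N ->
  exists C : R, forall f, A f -> N s f <= C * N s.+1 f.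
Hypothesis Nmul : forall s, (1 <= s)%N -> exists C : R,
  forall f1 f2, A f1 -> A f2 -> N s (f1 \* f2) <= C * N s.+1 f1 * N s.+1 f2.

Lemma seminorm_ge0 t f : (1 <= t)%N -> A f -> 0 <= N t f.
Proof.
move=> t1 Af.
have zero_f : N t (fun x => 0 * f x) = 0 by rewrite Nscale // normr0 mul0r.
have f_sub_f : (fun x => 0 * f x) = f \+ (fun x => -1 * f x).
  by apply/funext => x /=; rewrite mul0r mulN1r subrr.
have := Nadd t1 Af (Ascale (-1) Af).
by rewrite -f_sub_f zero_f Nscale // normrN normr1 mul1r; lra.
Qed.

Lemma seminorm_le_level t u : (1 <= t)%N -> (t <= u)%N ->
  exists2 C, 0 <= C & forall f, A f -> N t f <= C * N u f.
Proof.
move=> t1 /subnKC <-; elim: (u - t)%N => [|k [C C0 HC]].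
  by exists 1 => // f _; rewrite addn0 mul1r.
have [C' HC'] := Nstep (leq_trans t1 (leq_addr k t)).
exists (C * Num.max C' 0) => [|f Af]; first by rewrite mulr_ge0 // le_max lexx orbT.
apply: (le_trans (HC f Af)); rewrite -mulrA ler_wpM2l //.
apply: (le_trans (HC' f Af)); rewrite addnS ler_wpM2r ?le_max ?lexx //.
exact: seminorm_ge0.
Qed.

Lemma prod_seq_mem (I : Type) (s : seq I) (g : I -> X -> R) :
  (0 < size s)%N -> (forall i, A (g i)) -> A (fun x => \prod_(i <- s) g i x).
Proof.
elim: s => [//|a [|b s] IH] _ Ag.
- rewrite (_ : (fun x => _) = g a); first exact: Ag.
  by apply/funext => x; rewrite big_seq1.
- by rewrite prod_cons_fun; apply: Amul _ _ (Ag a) (IH isT Ag).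
Qed.

Lemma prod_set_mem (T : finType) (S : {set T}) (g : T -> X -> R) :
  (0 < #|S|)%N -> (forall i, A (g i)) -> A (fun x => \prod_(i in S) g i x).
Proof. by move=> S0 Ag; rewrite prod_enum_fun; apply: prod_seq_mem; rewrite -?cardE. Qed.

Lemma seminorm_prod_seq (I : Type) n t u : (1 <= t)%N -> (t + n <= u)%N ->
  exists2 C, 0 <= C & forall (s : seq I) g, size s = n.+1 -> (forall i, A (g i)) ->
    N t (fun x => \prod_(i <- s) g i x) <= C * \prod_(i <- s) N u (g i).
Proof.
elim: n t => [|n IH] t t1 tnu.
  have [C C0 HC] := seminorm_le_level t1 (leq_trans (leq_addr 0 t) tnu).
  exists C => // [[|a [|]]] // g _ Ag; rewrite big_seq1.
  rewrite (_ : (fun x => _) = g a); first exact: HC.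
  by apply/funext => x; rewrite big_seq1.
have [t1' tu tnu'] : [/\ (1 <= t.+1)%N, (t.+1 <= u)%N & (t.+1 + n <= u)%N] by split; lia.
have [Cm HCm] := Nmul t1.
have [C1 C10 HC1] := seminorm_le_level t1' tu.
have [C2 C20 HC2] := IH t.+1 t1' tnu'.
exists (Num.max Cm 0 * C1 * C2) => [|[//|a s] g /= [sn] Ag].
  by rewrite !mulr_ge0 // le_max lexx orbT.
have s0 : (0 < size s)%N by rewrite sn.
rewrite prod_cons_fun big_cons.
have AG := prod_seq_mem s0 Ag.
have [Na NG] := (seminorm_ge0 t1' (Ag a), seminorm_ge0 t1' AG).
apply: (le_trans (HCm _ _ (Ag a) AG)).
apply: (@le_trans _ _ (Num.max Cm 0 * N t.+1 (g a) * N t.+1 (fun x => \prod_(i <- s) g i x))).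
  by rewrite ler_wpM2r // ler_wpM2r // le_max lexx.
have -> : Num.max Cm 0 * C1 * C2 * (N u (g a) * \prod_(j <- s) N u (g j)) =
    Num.max Cm 0 * (C1 * N u (g a)) * (C2 * \prod_(j <- s) N u (g j)) by ring.
rewrite -mulrA -[X in _ <= X]mulrA ler_wpM2l ?le_max ?lexx ?orbT //.
by apply: ler_pM => //; [exact: HC1 | exact: HC2].
Qed.

Lemma seminorm_prod_le (T : finType) t u : (1 <= t)%N ->
  exists2 C, 0 <= C & forall (S : {set T}) g, (0 < #|S|)%N -> (t + #|S| <= u.+1)%N ->
    (forall i, A (g i)) ->
    N t (fun x => \prod_(i in S) g i x) <= C * \prod_(i in S) N u (g i).
Proof.
move=> t1.
pose P n C := 0 <= C /\ ((t + n <= u)%N -> forall (s : seq T) g, size s = n.+1 ->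
  (forall i, A (g i)) ->
  N t (fun x => \prod_(i <- s) g i x) <= C * \prod_(i <- s) N u (g i)).
have [C PC] : exists C, forall n, (n <= u)%N -> P n C.
  apply: exists_uniform_bound => [n C C' CC' [C0 HC] | n _].
    split=> [|tnu s g sn Ag]; first exact: le_trans CC'.
    apply: le_trans (HC tnu s g sn Ag) _; rewrite ler_wpM2r //.
    by apply: prodr_ge0 => i _; apply: seminorm_ge0 (Ag i); lia.
  have [tnu | ut] := leqP (t + n) u.
    by have [C C0 HC] := seminorm_prod_seq T t1 tnu; exists C.
  by exists 0; split=> // tnu; move: ut; rewrite ltnNge tnu.
exists C => [|S g S0 Su Ag]; first exact: (PC 0%N isT).1.
rewrite prod_enum_fun -big_enum; apply: (PC #|S|.-1 _).2; rewrite -?cardE ?prednK //; lia.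
Qed.

End Seminorms.

Section Distances.
Variables (R : realType) (H : Type) (d : H -> H -> R) (T : finType) (h : T -> H).
Local Open Scope ereal_scope.

Lemma dQmax_le_dist (Q : {set {set T}}) (a : R) J i j :
  J \in Q -> i \in J -> j \in J -> dQmax d h Q <= a%:E -> (d (h i) (h j) <= a)%R.
Proof.
move=> JQ iJ jJ /bigmax_leP[_ /(_ J JQ)] /bigmax_leP[_ /(_ i iJ)].
by move=> /bigmax_leP[_ /(_ j jJ)]; rewrite lee_fin.
Qed.

Lemma dQmin_lt_dist (Q : {set {set T}}) (b : R) J K i j :
  J \in Q -> K \in Q -> J != K -> i \in J -> j \in K ->
  b%:E < dQmin d h Q -> (b < d (h i) (h j))%R.
Proof.
move=> JQ KQ JK iJ jK /bigmin_gtP[_ /(_ J JQ)] /bigmin_gtP[_ /(_ K)].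
rewrite KQ JK => /(_ isT) /bigmin_gtP[_ /(_ i iJ)] /bigmin_gtP[_ /(_ j jK)].
by rewrite lte_fin.
Qed.

Lemma sepmin_ge (b : R) : (1 < #|T|)%N ->
  (forall i j, i != j -> (b < d (h i) (h j))%R) -> (b <= fine (sepmin d h))%R.
Proof.
move=> /card_gt1P[i0 [i1 [_ _ i01]]] sep.
have lower : b%:E <= sepmin d h.
  apply: le_bigmin => [|i _]; first exact: leey.
  apply: le_bigmin => [|j ij]; first exact: leey.
  by rewrite lee_fin ltW // sep.
have upper : sepmin d h <= (d (h i0) (h i1))%:E.
  rewrite /sepmin (bigminD1 i0) // ge_min; apply/orP; left; exact: bigmin_le_cond.
by move: lower upper; case: (sepmin d h).
Qed.

End Distances.

Section Clustering.
Variables (R : realType) (H : Type) (mul : H -> H -> H) (inv : H -> H) (e : H).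
Variables (dX : measure_display) (X : measurableType dX) (mu : probability X R).
Variables (act : H -> X -> X) (A : set (X -> R)).
Hypothesis Hgrp : is_group mul inv e.
Hypothesis Hact : is_mp_action mul e mu act.
Hypothesis Ameas : forall f, A f -> measurable_fun setT f.
Hypothesis Amul : forall f g, A f -> A g -> A (f \* g).
Hypothesis Aact : forall g f, A f -> A (hact inv act g f).

Lemma hactM g g' (F : X -> R) :
  hact inv act (mul g g') F = hact inv act g (hact inv act g' F).
Proof.
by case: Hact => _ act_mul _ _; apply/funext => x; rewrite /hact (group_invM Hgrp) act_mul.
Qed.

Lemma muI_hact g (F : X -> R) :
  measurable_fun setT F -> muI mu (hact inv act g F) = muI mu F.
Proof.
case: Hact => _ _ act_meas act_mp mF; rewrite /muI /hact; congr fine.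
apply: (integral_measure_preserving (act_meas _) (act_mp _) (F := EFin \o F)).
exact/measurable_EFinP.
Qed.

Variables (r : nat) (Q : {set {set 'I_r}}) (I : {set 'I_r}) (h : 'I_r -> H).
Variables (f : X -> R) (c : {set 'I_r} -> 'I_r).
Hypothesis partQ : finset.partition Q [set: 'I_r].
Hypothesis Af : A f.

Local Notation Qn := (blocks_meeting Q I).

Definition block_prod (K : {set 'I_r}) : X -> R :=
  fun x => \prod_(i in I :&: K) hact inv act (mul (inv (h (c K))) (h i)) f x.

Lemma block_prod_mem K : K \in Qn -> A (block_prod K).
Proof.
rewrite inE => /andP[_ IK0]; apply: prod_set_mem => // [|i]; first by rewrite card_gt0.
exact: Aact.
Qed.

Lemma hact_block_prod K :
  hact inv act (h (c K)) (block_prod K) = fun x => \prod_(i in I :&: K) hact inv act (h i) f x.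
Proof.
apply/funext => x; rewrite {1}/hact /block_prod; apply: eq_bigr => i _.
by rewrite -{2}(group_mulKV Hgrp (h (c K)) (h i)) (hactM (h (c K))).
Qed.

Lemma psi_block K : K \in Qn -> psi inv mu act f h (I :&: K) = muI mu (block_prod K).
Proof.
move=> KQn; have := KQn; rewrite inE => /andP[_ /negbTE IK0].
by rewrite /psi IK0 -hact_block_prod muI_hact //; apply/Ameas/block_prod_mem.
Qed.

Lemma psiQ_blocks : psiQ inv mu act Q f h I = \prod_(K in Qn) muI mu (block_prod K).
Proof.
rewrite /psiQ (big_blocks_meeting _ _ _ (G := psi inv mu act f h)); last by rewrite /psi eqxx.
by apply: eq_bigr => K KQn; rewrite psi_block.
Qed.

Lemma psi_blocks : I != finset.set0 ->
  psi inv mu act f h I =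
  muI mu (fun x => \prod_(K in Qn) hact inv act (h (c K)) (block_prod K) x).
Proof.
move=> I0; rewrite /psi (negbTE I0); congr (muI mu _); apply/funext => x.
rewrite (big_partition_meeting _ partQ); apply: eq_bigr => K _.
by rewrite hact_block_prod.
Qed.

Variables (N : nat -> (X -> R) -> R) (d : H -> H -> R) (delta : nat -> R).
Variables (t : nat) (CM beta : R).
Hypothesis c_mem : forall K, K \in Q -> c K \in K.
Hypothesis Nt_ge0 : forall F, A F -> 0 <= N t F.
Hypothesis CM_ge0 : 0 <= CM.
Hypothesis mixing : forall k, (2 <= k <= r)%N ->
  forall (F : 'I_k -> X -> R) (g : 'I_k -> H), (forall i, A (F i)) ->
  `|muI mu (fun x => \prod_(i < k) hact inv act (g i) (F i) x) - \prod_(i < k) muI mu (F i)|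
    <= CM * expR (- (delta k * fine (sepmin d g))) * \prod_(i < k) N t (F i).
Hypothesis delta_r_ge0 : 0 <= delta r.
Hypothesis delta_mono : forall k, (2 <= k <= r)%N -> delta r <= delta k.
Hypothesis beta_ge0 : 0 <= beta.
Hypothesis separated : (beta%:E < dQmin d h Q)%E.

Lemma anchors_separated k (K : 'I_k -> {set 'I_r}) :
  (1 < k)%N -> injective K -> (forall i, K i \in Q) ->
  beta <= fine (sepmin d (fun i => h (c (K i)))).
Proof.
move=> k1 Kinj KQ; apply: sepmin_ge; first by rewrite card_ord.
move=> i j ij; apply: (dQmin_lt_dist (KQ i) (KQ j) _ (c_mem (KQ i)) (c_mem (KQ j)) separated).
by rewrite (inj_eq Kinj).
Qed.

Lemma psi_sub_psiQ_le_mixing : I != finset.set0 ->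
  `|psi inv mu act f h I - psiQ inv mu act Q f h I|
    <= CM * expR (- (delta r * beta)) * \prod_(K in Qn) N t (block_prod K).
Proof.
move=> I0; rewrite psi_blocks // psiQ_blocks.
have NQn_ge0 : 0 <= \prod_(K in Qn) N t (block_prod K).
  by apply: prodr_ge0 => K KQn; apply/Nt_ge0/block_prod_mem.
have [/eqP/cards1P[K0 QnE] | Qn1] := eqVneq #|Qn| 1%N.
  rewrite (_ : (fun x => _) = hact inv act (h (c K0)) (block_prod K0)); last first.
    by apply/funext => x; rewrite QnE big_set1.
  have K0Qn : K0 \in Qn by rewrite QnE set11.
  rewrite {1}QnE big_set1 muI_hact ?subrr ?normr0 ?mulr_ge0 ?expR_ge0 //.
  exact/Ameas/block_prod_mem.
have Qn2 : (2 <= #|Qn| <= r)%N.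
  rewrite ltn_neqAle eq_sym Qn1 card_blocks_meeting_gt0 //=.
  by have := card_blocks_meeting I partQ; rewrite card_ord.
have KQn (i : 'I_#|Qn|) : enum_val i \in Qn by exact: enum_valP.
rewrite (_ : (fun x => _) = fun x => \prod_(i < #|Qn|)
    hact inv act (h (c (enum_val i))) (block_prod (enum_val i)) x); last first.
  by apply/funext => x; rewrite big_enum_val.
rewrite big_enum_val [X in _ <= _ * X]big_enum_val.
apply: le_trans (@mixing _ Qn2 _ _ (fun i => block_prod_mem (KQn i))) _.
rewrite ler_wpM2r ?ler_wpM2l ?ler_expR ?lerN2 //.
  by apply: prodr_ge0 => i _; apply/Nt_ge0/block_prod_mem.
apply: ler_pM => //; first exact: delta_mono.
apply: anchors_separated; first by case/andP: Qn2.
- exact: enum_val_inj.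
- by move=> i; have := KQn i; rewrite inE => /andP[].
Qed.

Variables (s : nat) (sig Cp Ca alpha : R).
Hypothesis Ns_ge0 : forall F, A F -> 0 <= N s F.
Hypothesis Cp_ge0 : 0 <= Cp.
Hypothesis level_gap : (t + r <= s.+1)%N.
Hypothesis prod_bound : forall (S : {set 'I_r}) (g : 'I_r -> X -> R),
  (0 < #|S|)%N -> (t + #|S| <= s.+1)%N -> (forall i, A (g i)) ->
  N t (fun x => \prod_(i in S) g i x) <= Cp * \prod_(i in S) N s (g i).
Hypothesis Ca_ge0 : 0 <= Ca.
Hypothesis act_bound : forall g F, A F ->
  N s (hact inv act g F) <= Ca * expR (sig * d g e) * N s F.
Hypothesis sig_ge0 : 0 <= sig.
Hypothesis Hinv : left_invariant mul d.
Hypothesis clustered : (dQmax d h Q <= alpha%:E)%E.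

Lemma block_prod_norm_le K : K \in Qn ->
  N t (block_prod K) <= Cp * (Ca * expR (sig * alpha) * N s f) ^+ #|I :&: K|.
Proof.
move=> KQn; have := KQn; rewrite inE => /andP[KQ IK0].
have IK_le : (t + #|I :&: K| <= s.+1)%N.
  by apply: leq_trans level_gap; rewrite leq_add2l; have := max_card (I :&: K); rewrite card_ord.
rewrite -card_gt0 in IK0.
apply: le_trans (prod_bound IK0 IK_le (fun i => Aact (mul (inv (h (c K))) (h i)) Af)) _.
rewrite -prodr_const ler_wpM2l //; apply: ler_prod => i; rewrite inE => /andP[_ iK].
rewrite (Ns_ge0 (Aact _ Af)) /=; apply: le_trans (act_bound _ Af) _.
rewrite ler_wpM2r ?Ns_ge0 // ler_wpM2l // ler_expR ler_wpM2l // (dist_mulV_unit Hgrp Hinv).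
exact: dQmax_le_dist KQ iK (c_mem KQ) clustered.
Qed.

Lemma psi_sub_psiQ_le :
  `|psi inv mu act f h I - psiQ inv mu act Q f h I|
    <= CM * expR (- (delta r * beta)) * Cp ^+ #|Qn|
       * (Ca * expR (sig * alpha) * N s f) ^+ #|I|.
Proof.
set x := Ca * expR (sig * alpha) * N s f.
have x_ge0 : 0 <= x by rewrite !mulr_ge0 ?expR_ge0 ?Ns_ge0.
have [-> | I0] := eqVneq I finset.set0.
  rewrite /psi /psiQ eqxx big1 ?subrr ?normr0 => [|K _]; last by rewrite finset.set0I /psi eqxx.
  by rewrite !mulr_ge0 ?exprn_ge0 ?expR_ge0.
apply: le_trans (psi_sub_psiQ_le_mixing I0) _.
rewrite -!mulrA ler_wpM2l // ler_wpM2l ?expR_ge0 //.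
have -> : Cp ^+ #|Qn| * x ^+ #|I| = \prod_(K in Qn) (Cp * x ^+ #|I :&: K|).
  rewrite big_split /= prodr_const; congr (_ * _).
  rewrite -prodr_const (big_partition_meeting _ partQ).
  by apply: eq_bigr => K _; rewrite prodr_const.
apply: ler_prod => K KQn; rewrite (Nt_ge0 (block_prod_mem KQn)) /=.
exact: block_prod_norm_le.
Qed.

Hypothesis alpha_ge0 : 0 <= alpha.

Lemma psi_sub_psiQ_le_exp :
  `|psi inv mu act f h I - psiQ inv mu act Q f h I|
    <= CM * Num.max 1 Cp ^+ r * Num.max 1 Ca ^+ r
       * expR (- (beta * delta r - r%:R * alpha * sig)) * N s f ^+ #|I|.
Proof.
apply: le_trans psi_sub_psiQ_le _.
rewrite (_ : expR (- (beta * delta r - r%:R * alpha * sig))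
    = expR (- (delta r * beta)) * expR (sig * alpha) ^+ r); last first.
  by rewrite -expRM_natl -expRD; congr expR; ring.
apply: ler_prod_pow_max1; rewrite ?expR_ge0 ?Ns_ge0 //.
- by rewrite -expR0 ler_expR mulr_ge0.
- by have := card_blocks_meeting I partQ; rewrite card_ord.
- by have := max_card I; rewrite card_ord.
Qed.

End Clustering.

Section UniformConstants.
Variables (R : realType) (H : Type) (inv : H -> H) (e : H) (d : H -> H -> R).
Variables (dX : measure_display) (X : measurableType dX) (mu : probability X R).
Variables (act : H -> X -> X) (A : set (X -> R)) (N : nat -> (X -> R) -> R).

Lemma exp_mixing_uniform (delta : nat -> R) (sk : nat -> nat) (r t : nat) :
  exp_mixing_all_orders inv d mu act A N delta sk ->
  (forall F, A F -> 0 <= N t F) -> (forall k, (2 <= k <= r)%N -> (sk k < t)%N) ->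
  exists2 CM, 0 <= CM & forall k, (2 <= k <= r)%N ->
    forall (F : 'I_k -> X -> R) (g : 'I_k -> H), (forall i, A (F i)) ->
    `|muI mu (fun x => \prod_(i < k) hact inv act (g i) (F i) x)
      - \prod_(i < k) muI mu (F i)|
      <= CM * expR (- (delta k * fine (sepmin d g))) * \prod_(i < k) N t (F i).
Proof.
move=> mixing Nt_ge0 sk_lt.
pose P k C := (2 <= k <= r)%N ->
  forall (F : 'I_k -> X -> R) (g : 'I_k -> H), (forall i, A (F i)) ->
  `|muI mu (fun x => \prod_(i < k) hact inv act (g i) (F i) x)
    - \prod_(i < k) muI mu (F i)|
    <= C * expR (- (delta k * fine (sepmin d g))) * \prod_(i < k) N t (F i).
have P_mono k C C' : C <= C' -> P k C -> P k C'.
  move=> CC' HC kr F g AF; apply: le_trans (HC kr F g AF) _.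
  by rewrite ler_wpM2r ?ler_wpM2r ?expR_ge0 //; apply: prodr_ge0 => i _; exact: Nt_ge0.
have [C PC] : exists C, forall k, (k <= r)%N -> P k C.
  apply: exists_uniform_bound => // k kr; have [k2 | k1] := leqP 2 k.
    have [_ [_ mix_k]] := mixing k k2.
    have [C HC] := mix_k t (sk_lt k (introT andP (conj k2 kr))).
    by exists C => _.
  by exists 0 => /andP[k2]; rewrite leqNgt k1 in k2.
exists (Num.max C 0); first by rewrite le_max lexx orbT.
move=> k /andP[k2 kr]; apply: P_mono (PC k kr) _; last by rewrite k2.
by rewrite le_max lexx.
Qed.

Lemma seminorm_hact_le (sig : R) (s : nat) :
  (forall F, A F -> 0 <= N s F) ->
  (exists C, forall g F, A F -> N s (hact inv act g F) <= C * expR (sig * d g e) * N s F) ->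
  exists2 Ca, 0 <= Ca & forall g F, A F ->
    N s (hact inv act g F) <= Ca * expR (sig * d g e) * N s F.
Proof.
move=> Ns_ge0 [C HC]; exists (Num.max C 0) => [|g F AF]; first by rewrite le_max lexx orbT.
apply: le_trans (HC g F AF) _.
by rewrite ler_wpM2r ?Ns_ge0 // ler_wpM2r ?expR_ge0 // le_max lexx.
Qed.

End UniformConstants.

Theorem lemma9p1 (R : realType)
  (H : Type) (mul : H -> H -> H) (inv : H -> H) (e : H) (d : H -> H -> R)
  (dX : measure_display) (X : measurableType dX) (mu : probability X R)
  (act : H -> X -> X) (A : set (X -> R)) (N : nat -> (X -> R) -> R)
  (sigma delta : nat -> R) (sk : nat -> nat)
  (Hgrp : is_group mul inv e) (Hmet : is_metric d) (Hinv : left_invariant mul d)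
  (Hact : is_mp_action mul e mu act)
  (HA : is_inv_subalgebra inv mu act A)
  (HN : seminorms_ok inv e d mu act A N sigma)
  (Hsig_pos : forall s, (1 <= s)%N -> 0 < sigma s)
  (Hsig_mon : forall s t, (1 <= s)%N -> (s <= t)%N -> sigma s <= sigma t)
  (Hsk_mon : forall k l, (2 <= k)%N -> (k <= l)%N -> (sk k <= sk l)%N)
  (Hdelta_mon : forall k l, (2 <= k)%N -> (k <= l)%N -> delta l <= delta k)
  (Hdelta_sig : forall k s, (2 <= k)%N -> (1 <= s)%N -> delta k < k%:R * sigma s)
  (Hmix : exp_mixing_all_orders inv d mu act A N delta sk)
  (r : nat) (hr : (3 <= r)%N) (s : nat) (hs : (sk r + r < s)%N) :
  exists C : R,
    forall alpha beta : R, 0 <= alpha -> alpha < beta ->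
    forall Q : {set {set 'I_r}}, finset.partition Q (finset.setT : {set 'I_r}) ->
    forall h : 'I_r -> H, DeltaQ d Q alpha beta h ->
    forall f : X -> R, A f ->
    forall I : {set 'I_r},
      `| psi inv mu act f h I - psiQ inv mu act Q f h I |
      <= C * expR (- (beta * delta r - r%:R * alpha * sigma s)) * N s f ^+ #|I|.
Proof.
case: HA => Ameas [_ [_ [Amul [Ascale Aact]]]].
case: HN => Nadd [Nscale [Nstep [_ [Nact Nmul]]]].
have N_ge0 u : (1 <= u)%N -> forall F, A F -> 0 <= N u F.
  by move=> u1 F; exact: seminorm_ge0.
have [s1 t1 r0 r2] : [/\ (1 <= s)%N, (1 <= s - r)%N, (0 < r)%N & (2 <= r)%N] by split; lia.
have sk_lt k : (2 <= k <= r)%N -> (sk k < s - r)%N.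
  by case/andP=> k2 kr; have := Hsk_mon k r k2 kr; lia.
have [CM CM_ge0 mixing] := exp_mixing_uniform Hmix (N_ge0 _ t1) sk_lt.
have [Cp Cp_ge0 prod_bound] := seminorm_prod_le Amul Ascale Nadd Nscale Nstep Nmul 'I_r s t1.
have [Ca Ca_ge0 act_bound] := seminorm_hact_le (N_ge0 _ s1) (Nact s s1).
exists (CM * Num.max 1 Cp ^+ r * Num.max 1 Ca ^+ r).
move=> alpha beta alpha_ge0 alpha_beta Q partQ h [clustered separated] f Af I.
have [c c_mem] := exists_partition_anchor (Ordinal r0) partQ.
have [delta_r_gt0 _] := Hmix r r2.
apply: (psi_sub_psiQ_le_exp Hgrp Hact Ameas Amul Aact I partQ Af c_mem (N_ge0 _ t1) CM_ge0
  mixing (ltW delta_r_gt0) _ (le_trans alpha_ge0 (ltW alpha_beta)) separated (N_ge0 _ s1)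
  Cp_ge0 _ prod_bound Ca_ge0 act_bound (ltW (Hsig_pos s s1)) Hinv clustered alpha_ge0).
- by move=> k /andP[k2 kr]; exact: Hdelta_mon.
- by lia.
Qed.
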